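(* Consider an iteration of the $(k,k-1)$-completion with current subgraph $H$, chosen pair $(x,y)$, chosen shortest path $P_{x,y}$, chosen minimal $k$-segmentation $\mathcal{S}$, and added edges $e_1,\ldots,e_t$ (the elements of $E_k(\mathcal{S},H)$). Let $a,b$ be vertices in $\bigcup_{i=1}^t V(e_i)$ and let $s,s'$ be their respective centers. If the pair $(s,s')$ is finalized in $H$, i.e. \[ \mathrm{dist}_H(s,s')\leq k\cdot\mathrm{dist}_G(s,s')-k^2W, \] then $a,b$ are the two endpoints of a segment of $\mathcal{S}$ that has stretch at most $k$ in $H$ (i.e. $\mathrm{dist}_H(a,b)\leq k\,\mathrm{dist}_G(a,b)$).
   Context: $G=(V,E,w)$ is an undirected graph with positive edge weights, in which every edge is a shortest path between its endpoints; $\mathrm{dist}_X$ is the weighted shortest-path distance in a graph $X$, and $W=W_{\max}(G)$ is the maximum edge weight. $k\geq3$ is odd and $R=(k-1)/2$. For a shortest path $P_{x,y}=(x_0,\ldots,x_t)$ in $G$ and $H\subseteq G$, a $k$-segmentation is a sequence of index intervals $([i_0,i_1],\ldots,[i_{s-1},i_s])$ with $0=i_0<\cdots<i_s=t$ such that every segment with $i_j-i_{j-1}\geq2$ satisfies $\mathrm{dist}_H(x_{i_{j-1}},x_{i_j})\leq k\,\mathrm{dist}_G(x_{i_{j-1}},x_{i_j})$; it is minimal if no consecutive sequence of segments can be merged to give another $k$-segmentation. $E_k(\mathcal{S},H)$ is the set of edges $e=\{u,v\}$ forming length-one segments of $\mathcal{S}$ with $\mathrm{dist}_H(u,v)>k\,w(e)$.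 The $(k,k-1)$-completion starts from $H\gets H_0$, where $H_0$ is the $(2k-1)$-spanner output by the Baswana–Sen clustering algorithm with parameter $k$ (with sampled center sets $V=S_0\supseteq S_1\supseteq\cdots$), and, while some pair $x,y$ has $\mathrm{dist}_H(x,y)>k\,\mathrm{dist}_G(x,y)+(k-1)W$, picks such a pair, a shortest path $P_{x,y}$, a minimal $k$-segmentation $\mathcal{S}$ w.r.t. the current $H$, and sets $H\gets H\cup E_k(\mathcal{S},H)$. For an endpoint $a$ of an edge $e\in E_k(\mathcal{S},H)$, its center is its Baswana–Sen cluster center $s_a$ in the level-$R$ center set $S_R$; by the Baswana–Sen clustering invariant it satisfies $\mathrm{dist}_H(a,s_a)\leq R\cdot w(e)$. *)

From HB Require Import structures.
From mathcomp Require Import all_boot all_order all_algebra.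
From mathcomp Require Import boolp classical_sets reals constructive_ereal ereal.

Set Implicit Arguments.
Unset Strict Implicit.
Unset Printing Implicit Defensive.

Import Order.TTheory GRing.Theory Num.Theory.
Local Open Scope ring_scope.
Local Open Scope classical_set_scope.

Section Graphs.
Variables (R : realType) (T : finType).

Fixpoint walk_weight (w : T -> T -> R) (u : T) (p : seq T) : R :=
  match p with
  | [::] => 0
  | v :: p' => w u v + walk_weight w v p'
  end.

Definition dist (X : rel T) (w : T -> T -> R) (u v : T) : \bar R :=
  ereal_inf [set (walk_weight w u p)%:E | p in
              [set p : seq T | path X u p /\ last u p = v]].

Definition Wmax (X : rel T) (w : T -> T -> R) : R :=
  \big[Num.max/0]_(e : T * T | X e.1 e.2) w e.1 e.2.

(* The path P = (x_0, ..., x_t) is represented as x :: p, so t = size p and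
   x_i = nth x (x :: p) i. *)
Definition pnode (x : T) (p : seq T) (i : nat) : T := nth x (x :: p) i.

Definition is_kseg (k : nat) (E H : rel T) (w : T -> T -> R)
    (x : T) (p : seq T) (I : seq nat) : Prop :=
  [/\ sorted ltn I, head 1%N I = 0%N, last 0%N I = size p &
      forall j, (0 < j < size I)%N ->
        (2 <= nth 0%N I j - nth 0%N I j.-1)%N ->
        (dist H w (pnode x p (nth 0%N I j.-1)) (pnode x p (nth 0%N I j))
          <= (k%:R)%:E * dist E w (pnode x p (nth 0%N I j.-1)) (pnode x p (nth 0%N I j)))%E].

(* Minimal: no run of consecutive segments (segments number q0+1 .. q, with
   q - q0 >= 2, i.e. at least two segments) can be merged into one segment
   so as to give another k-segmentation. *)
Definition is_min_kseg (k : nat) (E H : rel T) (w : T -> T -> R)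
    (x : T) (p : seq T) (I : seq nat) : Prop :=
  is_kseg k E H w x p I /\
  forall q0 q, (q0.+1 < q)%N -> (q < size I)%N ->
    ~ is_kseg k E H w x p (take q0.+1 I ++ drop q I).

Definition is_segment_pair (x : T) (p : seq T) (I : seq nat) (j : nat)
    (u v : T) : Prop :=
  (0 < j < size I)%N /\
  ((u = pnode x p (nth 0%N I j.-1) /\ v = pnode x p (nth 0%N I j)) \/
   (v = pnode x p (nth 0%N I j.-1) /\ u = pnode x p (nth 0%N I j))).

Definition in_Ek (k : nat) (H : rel T) (w : T -> T -> R)
    (x : T) (p : seq T) (I : seq nat) (u v : T) : Prop :=
  exists j, [/\ is_segment_pair x p I j u v,
               (nth 0%N I j - nth 0%N I j.-1)%N = 1%N &
               (dist H w u v > (k%:R * w u v)%:E)%E].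

End Graphs.

From HB Require Import structures.
From mathcomp Require Import all_boot all_order all_algebra.
From mathcomp Require Import boolp classical_sets reals constructive_ereal ereal.
From mathcomp Require Import lra zify.
Import Order.TTheory GRing.Theory Num.Theory.

Set Implicit Arguments.
Unset Strict Implicit.
Unset Printing Implicit Defensive.

Local Open Scope ring_scope.

(* With R = (k-1)/2, the triangle inequality through the centres gives
   dist_H(a,b) <= R w(e_a) + dist_H(s,s') + R w(e_b) and
   dist_G(s,s') <= R w(e_a) + dist_G(a,b) + R w(e_b), so the finalization bound and
   (k+1) R (w(e_a) + w(e_b)) <= (k^2 - 1) W yield dist_H(a,b) <= k dist_G(a,b) - W.
   In particular a <> b, and if the breakpoints of a and b in S were not consecutive,
   the segments between them could be merged into a single segment of stretch at most k,
   contradicting the minimality of S. *)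

Lemma last_rev_belast (T : Type) (u : T) p :
  last (last u p) (rev (belast u p)) = u.
Proof. by case: p => //= z p; rewrite rev_cons last_rcons. Qed.

Section Walks.
Variables (R : realType) (T : finType) (w : T -> T -> R).

Lemma walk_weight_cat u p q :
  walk_weight w u (p ++ q) = walk_weight w u p + walk_weight w (last u p) q.
Proof. by elim: p u => [|z p IHp] u /=; rewrite ?add0r // IHp addrA. Qed.

Lemma walk_weight_rcons u p z :
  walk_weight w u (rcons p z) = walk_weight w u p + w (last u p) z.
Proof. by rewrite -cats1 walk_weight_cat /= addr0. Qed.

End Walks.

Section Distance.
Variables (R : realType) (T : finType) (X : rel T) (w : T -> T -> R).
Hypothesis w_ge0 : forall u v, X u v -> 0 <= w u v.

Lemma dist_le_walk_weight u p :
  path X u p -> (dist X w u (last u p) <= (walk_weight w u p)%:E)%E.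
Proof. by move=> Xp; apply: ereal_inf_lbound; exists p. Qed.

Lemma walk_weight_ge0 u p : path X u p -> 0 <= walk_weight w u p.
Proof.
elim: p u => [|z p IHp] u //= /andP[Xuz Xp].
by rewrite addr_ge0 ?w_ge0 ?IHp.
Qed.

Lemma dist_ge0 u v : (0 <= dist X w u v)%E.
Proof.
apply/ereal_infP => _ [p [Xp _] <-].
by rewrite lee_fin walk_weight_ge0.
Qed.

Lemma dist_refl u : dist X w u u = 0%:E.
Proof. by apply/le_anti; rewrite dist_ge0 andbT (@dist_le_walk_weight u [::]). Qed.

Lemma dist_triangle u m v :
  (dist X w u v <= dist X w u m + dist X w m v)%E.
Proof.
case Dmv: (dist X w m v) => [r| |]; last by have := dist_ge0 m v; rewrite Dmv.
- rewrite -leeBlDr //; apply/ereal_infP => _ [p [Xp p_m] <-].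
  rewrite leeBlDr // -leeBlDl // -Dmv.
  apply/ereal_infP => _ [q [Xq q_v] <-].
  rewrite leeBlDl // -EFinD -p_m -walk_weight_cat.
  have := @dist_le_walk_weight u (p ++ q).
  by rewrite cat_path Xp p_m Xq last_cat p_m q_v; apply.
- rewrite addey ?leey //.
  by have := dist_ge0 u m; case: (dist X w u m).
Qed.

Lemma dist_subrel_le (Y : rel T) :
  subrel X Y -> forall u v, (dist Y w u v <= dist X w u v)%E.
Proof.
move=> XY u v; apply/ereal_infP => _ [p [Xp <-] <-].
by apply: ereal_inf_lbound; exists p; split=> //; apply: sub_path Xp.
Qed.

Hypotheses (X_sym : symmetric X) (w_sym : forall u v, X u v -> w u v = w v u).

Lemma walk_weight_rev u p : path X u p ->
  walk_weight w (last u p) (rev (belast u p)) = walk_weight w u p.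
Proof.
elim: p u => [|z p IHp] u //= /andP[Xuz Xp].
by rewrite rev_cons walk_weight_rcons IHp // last_rev_belast addrC (w_sym Xuz).
Qed.

Lemma dist_sym u v : dist X w u v = dist X w v u.
Proof.
wlog suff: u v / (dist X w u v <= dist X w v u)%E.
  by move=> le_dist; apply/le_anti; rewrite !le_dist.
apply/ereal_infP => _ [p [Xp <-] <-].
rewrite -walk_weight_rev //.
have Xrp : path X (last v p) (rev (belast v p)).
  by rewrite rev_path (eq_path (e' := X)) // => a b; rewrite X_sym.
by have := dist_le_walk_weight Xrp; rewrite last_rev_belast.
Qed.

End Distance.

Section FinalizedCenters.
Variables (R : realType) (T : finType) (X Y : rel T) (w : T -> T -> R).
Hypotheses (XY : subrel X Y) (X_sym : symmetric X)
  (w_sym : forall u v, X u v -> w u v = w v u)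
  (w_ge0 : forall u v, Y u v -> 0 <= w u v).

Lemma dist_le_through_centers (K ra rb c : R) a b s s' : 0 < K ->
  (dist X w a s <= ra%:E)%E -> (dist X w b s' <= rb%:E)%E ->
  (dist X w s s' <= K%:E * dist Y w s s' - c%:E)%E ->
  (dist X w a b <= K%:E * dist Y w a b + ((K + 1) * (ra + rb) - c)%:E)%E.
Proof.
move=> K_gt0 as_ra bs'_rb ss'_bound.
have wX_ge0 u v : X u v -> 0 <= w u v by move/XY/w_ge0.
case Dab: (dist Y w a b) => [e| |]; last 2 first.
- by rewrite mulry gtr0_sg // mul1e addye // leey.
- by have := dist_ge0 w_ge0 a b; rewrite Dab.
have DYss' : (dist Y w s s' <= (ra + (e + rb))%:E)%E.
  apply: le_trans (dist_triangle w_ge0 s a s') _; rewrite !EFinD -Dab.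
  apply: leeD; first by apply: le_trans (dist_subrel_le w XY s a) _; rewrite dist_sym.
  apply: le_trans (dist_triangle w_ge0 a b s') _.
  by apply: leeD2l; apply: le_trans (dist_subrel_le w XY b s') _.
have DXss' : (dist X w s s' <= (K * (ra + (e + rb)) - c)%:E)%E.
  by rewrite (le_trans ss'_bound) // EFinB EFinM leeB // lee_wpmul2l // lee_fin ltW.
have Ds'b : (dist X w s' b <= rb%:E)%E by rewrite dist_sym.
apply: le_trans (dist_triangle wX_ge0 a s b) _.
apply: le_trans (leeD as_ra (le_trans (dist_triangle wX_ge0 s s' b) (leeD DXss' Ds'b))) _.
by rewrite -EFinM -!EFinD lee_fin; lra.
Qed.

End FinalizedCenters.

Lemma le_Wmax (R : realType) (T : finType) (E : rel T) (w : T -> T -> R) u v :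
  E u v -> w u v <= Wmax E w.
Proof. by move=> Euv; apply: (le_bigmax_cond _ (j := (u, v)) (P := fun e => E e.1 e.2)). Qed.

Lemma nth_leq_last (I : seq nat) j :
  sorted ltn I -> (j < size I)%N -> (nth 0%N I j <= last 0%N I)%N.
Proof.
move=> I_sorted j_lt; rewrite -nth_last.
have [->|j_ne] := eqVneq j (size I).-1; first by [].
by apply/ltnW/(sorted_ltn_nth ltn_trans) => //; rewrite ?inE /=; lia.
Qed.

Section Segmentations.
Variables (R : realType) (T : finType) (E H : rel T) (w : T -> T -> R).
Variables (k : nat) (x : T) (p : seq T).

Lemma in_Ek_node I u v : in_Ek k H w x p I u v ->
  exists2 i, (i < size I)%N & u = pnode x p (nth 0%N I i).
Proof.
case=> j [[/andP[j_gt0 j_lt] [[-> _]|[_ ->]]] _ _]; last by exists j.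
by exists j.-1 => //; lia.
Qed.

Lemma in_Ek_edge I u v : symmetric E -> path E x p ->
  sorted ltn I -> last 0%N I = size p -> in_Ek k H w x p I u v -> E u v.
Proof.
move=> E_sym Ep I_sorted I_last [j [[/andP[j_gt0 j_lt] uv_seg] unit_seg _]].
have := nth_leq_last I_sorted j_lt; rewrite I_last.
set i := nth 0%N I j.-1 in unit_seg uv_seg.
have ij : nth 0%N I j = i.+1 by lia.
rewrite ij => i_lt; have := pathP x Ep i i_lt.
by case: uv_seg => [] [-> ->]; rewrite /pnode ij //= E_sym.
Qed.

Lemma is_kseg_merge I i j : is_kseg k E H w x p I ->
  (i.+1 < j)%N -> (j < size I)%N ->
  (dist H w (pnode x p (nth 0%N I i)) (pnode x p (nth 0%N I j))
     <= k%:R%:E * dist E w (pnode x p (nth 0%N I i)) (pnode x p (nth 0%N I j)))%E ->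
  is_kseg k E H w x p (take i.+1 I ++ drop j I).
Proof.
move=> [I_sorted I_head I_last I_seg] ij jI ij_stretch.
have size_take : size (take i.+1 I) = i.+1 by rewrite size_takel //; lia.
have nth_merge l : nth 0%N (take i.+1 I ++ drop j I) l =
    nth 0%N I (if (l < i.+1)%N then l else j + (l - i.+1))%N.
  by rewrite nth_cat size_take; case: ifP => l_lt; rewrite ?nth_take ?nth_drop.
split.
- apply: (subseq_sorted ltn_trans _ I_sorted).
  rewrite -[X in subseq _ X](cat_take_drop j I); apply: cat_subseq => //.
  rewrite -[X in subseq _ X](cat_take_drop i.+1 (take j I)) take_takel; last by lia.
  exact: prefix_subseq.
- by move: jI I_head; case: (I).
- rewrite last_cat -I_last -[X in _ = last _ X](cat_take_drop j I) last_cat.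
  by case: (drop j I) (size_drop j I) => [|z r] //=; lia.
rewrite size_cat size_take size_drop => l /andP[l_gt0 l_lt]; rewrite !nth_merge.
have [l_le|l_gt] := ltnP l i.+1.
  by rewrite (_ : (l.-1 < i.+1)%N); [apply: I_seg; lia | lia].
have [->|l_ne] := eqVneq l i.+1; first by rewrite /= ltnSn subnn addn0.
rewrite (_ : (l.-1 < i.+1)%N = false); last by lia.
by rewrite (_ : (j + (l.-1 - i.+1) = (j + (l - i.+1)).-1)%N); [apply: I_seg; lia | lia].
Qed.

Lemma min_kseg_adjacent I i j : is_min_kseg k E H w x p I ->
  (i < j < size I)%N ->
  (dist H w (pnode x p (nth 0%N I i)) (pnode x p (nth 0%N I j))
     <= k%:R%:E * dist E w (pnode x p (nth 0%N I i)) (pnode x p (nth 0%N I j)))%E ->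
  j = i.+1.
Proof.
move=> [I_kseg I_min] /andP[ij jI] ij_stretch.
have [//|j_ne] := eqVneq j i.+1.
have ij1 : (i.+1 < j)%N by lia.
by case: (I_min i j ij1 jI); apply: is_kseg_merge.
Qed.

Lemma min_kseg_segment_pair I i j u v : is_min_kseg k E H w x p I ->
  (i < size I)%N -> (j < size I)%N ->
  u = pnode x p (nth 0%N I i) -> v = pnode x p (nth 0%N I j) -> u <> v ->
  (dist H w u v <= k%:R%:E * dist E w u v)%E ->
  (dist H w v u <= k%:R%:E * dist E w v u)%E ->
  exists l, is_segment_pair x p I l u v.
Proof.
move=> I_min iI jI -> -> uv uv_stretch vu_stretch.
have [ij|ji|ij] := ltngtP i j; last by rewrite ij in uv.
- have ijI : (i < j < size I)%N by rewrite ij jI.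
  rewrite (min_kseg_adjacent I_min ijI uv_stretch).
  by exists i.+1; split; [lia | left].
- have jiI : (j < i < size I)%N by rewrite ji iI.
  rewrite (min_kseg_adjacent I_min jiI vu_stretch).
  by exists j.+1; split; [lia | right].
Qed.

End Segmentations.

Lemma center_slack_le (R : realFieldType) (k : nat) (wa wb W : R) :
  odd k -> wa <= W -> wb <= W ->
  (k%:R + 1) * ((k.-1)./2%:R * wa + (k.-1)./2%:R * wb) - (k ^ 2)%:R * W <= - W.
Proof.
move=> k_odd wa_le wb_le; set r : R := (k.-1)./2%:R.
have k_eq : k%:R = 2 * r + 1.
  have [m km] : exists m, k = m.*2.+1.
    by exists k./2; rewrite -[k in LHS]odd_double_half k_odd add1n.
  by rewrite /r km /= half_double -addn1 natrD -mul2n natrM.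
have r_ge0 : 0 <= r by [].
have : (2 * r + 2) * r * (wa + wb) <= (2 * r + 2) * r * (2 * W).
  by rewrite ler_wpM2l ?mulr_ge0 ?addr_ge0 //; lra.
rewrite natrX k_eq; lra.
Qed.

Theorem lemma4p10 (R : realType) (T : finType)
    (E : rel T) (w : T -> T -> R) (H : rel T) (k : nat)
    (x y : T) (p : seq T) (I : seq nat) (a b s s' : T) :
  (* G = (T, E, w): undirected simple graph, positive weights,
     every edge is a shortest path between its endpoints *)
  symmetric E -> irreflexive E ->
  (forall u v, E u v -> w u v = w v u) ->
  (forall u v, E u v -> 0 < w u v) ->
  (forall u v, E u v -> dist E w u v = (w u v)%:E) ->
  (* H is the current subgraph of G *)
  symmetric H -> (forall u v, H u v -> E u v) ->
  (* k >= 3 odd *)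
  (3 <= k)%N -> odd k ->
  (* the pair (x, y) chosen by the completion step *)
  (dist H w x y > (k%:R)%:E * dist E w x y + ((k.-1)%:R * Wmax E w)%:E)%E ->
  (* P_{x,y} = x :: p is a shortest path in G from x to y *)
  path E x p -> last x p = y -> (walk_weight w x p)%:E = dist E w x y ->
  (* S = I is a minimal k-segmentation of P w.r.t. H *)
  is_min_kseg k E H w x p I ->
  (* a, b are endpoints of added edges, s, s' their centers, satisfying the
     Baswana-Sen clustering invariant dist_H(a, s_a) <= R * w(e) *)
  (exists v, in_Ek k H w x p I a v) ->
  (exists v, in_Ek k H w x p I b v) ->
  (forall v, in_Ek k H w x p I a v ->
     (dist H w a s <= (((k.-1)./2)%:R * w a v)%:E)%E) ->
  (forall v, in_Ek k H w x p I b v ->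
     (dist H w b s' <= (((k.-1)./2)%:R * w b v)%:E)%E) ->
  (* (s, s') is finalized in H *)
  (dist H w s s' <= (k%:R)%:E * dist E w s s' - ((k ^ 2)%:R * Wmax E w)%:E)%E ->
  exists j, is_segment_pair x p I j a b /\
            (dist H w a b <= (k%:R)%:E * dist E w a b)%E.
Proof.
move=> E_sym _ w_sym w_gt0 _ H_sym HE k_ge3 k_odd _ Ep _ _ I_min [va a_va] [vb b_vb]
  as_bound bs'_bound ss'_final.
have [[I_sorted _ I_last _] _] := I_min.
have w_ge0 u v : E u v -> 0 <= w u v by move/w_gt0/ltW.
have wH_sym u v : H u v -> w u v = w v u by move/HE/w_sym.
have wH_ge0 u v : H u v -> 0 <= w u v by move/HE/w_ge0.
have Ea := in_Ek_edge E_sym Ep I_sorted I_last a_va.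
have Eb := in_Ek_edge E_sym Ep I_sorted I_last b_vb.
have [i iI a_i] := in_Ek_node a_va.
have [j jI b_j] := in_Ek_node b_vb.
set W := Wmax E w in ss'_final.
have W_gt0 : 0 < W by rewrite (lt_le_trans (w_gt0 _ _ Ea)) ?le_Wmax.
have K_gt0 : 0 < k%:R :> R by rewrite ltr0n; lia.
have ab_bound : (dist H w a b <= (k%:R)%:E * dist E w a b + (- W)%:E)%E.
  apply: le_trans (dist_le_through_centers HE H_sym wH_sym w_ge0 K_gt0
    (as_bound _ a_va) (bs'_bound _ b_vb) ss'_final) _.
  by apply/leeD2l; rewrite lee_fin center_slack_le ?le_Wmax.
have a_neq_b : a <> b.
  move=> ab; move: ab_bound; rewrite -ab (dist_refl wH_ge0) (dist_refl w_ge0).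
  by rewrite -EFinM mulr0 -EFinD add0r lee_fin; lra.
have ab_stretch : (dist H w a b <= (k%:R)%:E * dist E w a b)%E.
  by apply: le_trans ab_bound (geeDl _ _); rewrite lee_fin oppr_le0 ltW.
have ba_stretch : (dist H w b a <= (k%:R)%:E * dist E w b a)%E.
  by rewrite dist_sym // [dist E w b a]dist_sym.
have [l ab_seg] := min_kseg_segment_pair I_min iI jI a_i b_j a_neq_b ab_stretch ba_stretch.
by exists l.
Qed.
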